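(* Let $v$ be a vertex of a graph $G$ and let $H$ be a subgraph of $G$ containing $v$ and containing at least one vertex from each connected component of $G-v$. Then any $k$ level-disjoint partitions of $H$ rooted in $v$ can be extended to $k$ level-disjoint partitions of $G$ rooted in $v$ (i.e., there exist $k$ $v$-rooted level-disjoint partitions of $G$ whose restrictions to $V(H)$ are the given ones, levelwise).
   Context: All graphs are simple and undirected; $G$ is connected. For $S\subseteq V(G)$, $N(S)$ denotes the set of vertices adjacent to some vertex of $S$. A level partition of a graph $G$ is a tuple $\mathcal{S}=(S_0,\dots,S_h)$ of pairwise disjoint sets (levels) with union $V(G)$ such that $S_i\subseteq N(S_{i-1})$ for every $1\le i\le h$ (neighborhoods taken in that graph); $h=h(\mathcal{S})$ is its height. It is rooted in $v$ if $S_0=\{v\}$. Two level partitions $\mathcal{S},\mathcal{T}$ are level-disjoint if $S_i\cap T_i=\emptyset$ for every $1\le i\le\min(h(\mathcal{S}),h(\mathcal{T}))$; $k$ level partitions are level-disjoint partitions if they are pairwise level-disjoint. $G-v$ denotes $G$ with $v$ and its incident edges removed. *)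

From mathcomp Require Import all_boot.
Set Implicit Arguments. Unset Strict Implicit. Unset Printing Implicit Defensive.

Definition simple_graph (T : finType) (e : rel T) : Prop :=
  symmetric e /\ irreflexive e.

Definition connected_graph (T : finType) (e : rel T) : Prop :=
  forall x y : T, connect e x y.

Definition nbh (T : finType) (e : rel T) (S : {set T}) : {set T} :=
  [set y | [exists x in S, e x y]].

(* G - v : edge relation with v removed (vertex v becomes isolated and is
   never used as a path vertex). *)
Definition del_vertex (T : finType) (e : rel T) (v : T) : rel T :=
  [rel a b | [&& e a b, a != v & b != v]].

(* A level partition (S_0,...,S_h) is encoded as the list [S_0; ...; S_h];
   its height is size - 1.  Levels of the graph with vertex set V, edges e. *)
Definition level_partition (T : finType) (V : {set T}) (e : rel T)
  (L : seq {set T}) : Prop :=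
  [/\ (forall i j, i < size L -> j < size L -> i != j ->
         [disjoint nth set0 L i & nth set0 L j]),
      \bigcup_(S <- L) S = V
    & (forall i, 0 < i < size L -> nth set0 L i \subset nbh e (nth set0 L i.-1))].

Definition rooted_in (T : finType) (v : T) (L : seq {set T}) : Prop :=
  0 < size L /\ nth set0 L 0 = [set v].

Definition level_disjoint (T : finType) (L M : seq {set T}) : Prop :=
  forall i, 0 < i -> i < size L -> i < size M ->
    [disjoint nth set0 L i & nth set0 M i].

Definition level_disjoint_family (T : finType) (k : nat)
  (P : 'I_k -> seq {set T}) : Prop :=
  forall j1 j2 : 'I_k, j1 != j2 -> level_disjoint (P j1) (P j2).

From mathcomp Require Import all_boot.
Set Implicit Arguments. Unset Strict Implicit. Unset Printing Implicit Defensive.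

(* Start from the given partitions of H and add the missing vertices one at a
   time. A vertex x outside the current vertex set W that is adjacent in G - v
   to some y in W (such a pair exists as long as W <> V(G), because W meets
   every component of G - v) is put into the level right after the level of y,
   separately in each partition. The levels of y are positive (y <> v) and
   pairwise distinct by level-disjointness, so the levels receiving x are
   pairwise distinct too; and x lies outside V(H), so restrictions to V(H)
   are unchanged. *)

Section LevelPartitions.
Variable T : finType.
Implicit Types (W A B : {set T}) (e r : rel T) (L M : seq {set T}).

Lemma mem_bigcup_nth L z :
  z \in \bigcup_(S <- L) S <-> exists i, z \in nth set0 L i.
Proof.
elim: L => [|S L IH].
  by rewrite big_nil in_set0; split=> // [[i]]; rewrite nth_nil in_set0.
rewrite big_cons in_setU; split.
- by case/orP=> [zS|/IH [i zi]]; [exists 0 | exists i.+1].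
- by case=> [[|i]] /= zi; [rewrite zi | apply/orP; right; apply/IH; exists i].
Qed.

Lemma mem_nth_size L i z : z \in nth set0 L i -> i < size L.
Proof.
by apply: contraTT; rewrite -leqNgt => /(nth_default set0) ->; rewrite in_set0.
Qed.

Lemma nbhS r r' A B :
  subrel r r' -> A \subset B -> nbh r A \subset nbh r' B.
Proof.
move=> rr' /subsetP AB; apply/subsetP=> z; rewrite !inE => /existsP [w /andP [wA rwz]].
by apply/existsP; exists w; rewrite AB // rr'.
Qed.

Lemma level_partitionP W e L :
  level_partition W e L <->
  [/\ forall i1 i2 z, z \in nth set0 L i1 -> z \in nth set0 L i2 -> i1 = i2,
      forall z, z \in W <-> exists i, z \in nth set0 L i
    & forall i, 0 < i -> nth set0 L i \subset nbh e (nth set0 L i.-1)].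
Proof.
split=> [[D U N] | [D U N]]; split.
- move=> i1 i2 z z1 z2; apply/eqP; apply: contraTT isT => ne.
  have := D _ _ (mem_nth_size z1) (mem_nth_size z2) ne.
  by move/disjointFr/(_ z1); rewrite z2.
- by move=> z; rewrite -U; apply: mem_bigcup_nth.
- move=> i i0; have [lt_i | ge_i] := ltnP i (size L); first by rewrite N ?i0.
  by rewrite nth_default // sub0set.
- move=> i1 i2 _ _ ne; rewrite -setI_eq0; apply/eqP/setP=> z.
  rewrite !inE; apply/negbTE/negP=> /andP [z1 z2].
  by move/eqP: ne; apply; apply: D z1 z2.
- by apply/setP=> z; apply/idP/idP => [/mem_bigcup_nth/U | /U/mem_bigcup_nth].
- by move=> i /andP [i0 _]; apply: N.
Qed.

Lemma level_disjointP L M :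
  level_disjoint L M <->
  (forall i z, 0 < i -> z \in nth set0 L i -> z \in nth set0 M i -> False).
Proof.
split=> [D i z i0 zL zM | D i i0 _ _].
  have := D _ i0 (mem_nth_size zL) (mem_nth_size zM).
  by move/disjointFr/(_ zL); rewrite zM.
rewrite -setI_eq0; apply/eqP/setP=> z; rewrite !inE.
by apply/negbTE/negP=> /andP [zL zM]; apply: D zL zM.
Qed.

Lemma level_partition_subrel W e e' L :
  subrel e e' -> level_partition W e L -> level_partition W e' L.
Proof.
move=> ee' [D U N]; split=> // i iL.
exact: subset_trans (N i iL) (nbhS ee' (subxx _)).
Qed.

Lemma nth_level_sub W e L i : level_partition W e L -> nth set0 L i \subset W.
Proof. by case/level_partitionP=> _ U _; apply/subsetP=> z zi; apply/U; exists i. Qed.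

Lemma rooted_level_gt0 v L i y :
  rooted_in v L -> y != v -> y \in nth set0 L i -> 0 < i.
Proof. by case=> _ L0 yv; case: i => //; rewrite L0 inE (negbTE yv). Qed.

Definition add_level L n x : seq {set T} :=
  set_nth set0 L n (x |: nth set0 L n).

Lemma mem_add_level L n m x z :
  (z \in nth set0 (add_level L n x) m) = ((z == x) && (m == n)) || (z \in nth set0 L m).
Proof.
rewrite nth_set_nth /=; case: eqP => [-> | _]; last by rewrite andbF.
by rewrite in_setU1 andbT.
Qed.

Lemma add_level_setI L n x A m :
  x \notin A -> nth set0 (add_level L n x) m :&: A = nth set0 L m :&: A.
Proof.
move=> xA; apply/setP=> z; rewrite !inE mem_add_level.
by case: (eqVneq z x) => [-> | //]; rewrite (negbTE xA) !andbF.
Qed.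

Lemma rooted_add_level v L n x :
  0 < n -> rooted_in v L -> rooted_in v (add_level L n x).
Proof.
move=> n0 [L0 Lv]; split; first by rewrite size_set_nth leq_max L0 orbT.
by rewrite nth_set_nth /= eq_sym eqn0Ngt n0.
Qed.

Lemma level_partition_add_level W e L i x y :
  x \notin W -> y \in nth set0 L i -> e y x -> level_partition W e L ->
  level_partition (x |: W) e (add_level L i.+1 x).
Proof.
move=> xW yi eyx /level_partitionP [D U N].
have xL m : x \notin nth set0 L m by apply: contra xW => xm; apply/U; exists m.
apply/level_partitionP; split.
- move=> m1 m2 z; rewrite !mem_add_level.
  case: (eqVneq z x) => [-> | _] /=; last exact: D.
  by rewrite !(negbTE (xL _)) !orbF => /eqP -> /eqP ->.
- move=> z; rewrite in_setU1; split.
    case/orP=> [/eqP -> | /U [m zm]]; first by exists i.+1; rewrite mem_add_level !eqxx.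
    by exists m; rewrite mem_add_level zm orbT.
  case=> m; rewrite mem_add_level => /orP [/andP [-> _] // | zm].
  by apply/orP; right; apply/U; exists m.
- move=> m m0; apply/subsetP=> z; rewrite mem_add_level.
  have /subsetP sub_new :
      nbh e (nth set0 L m.-1) \subset nbh e (nth set0 (add_level L i.+1 x) m.-1).
    by apply: nbhS => //; apply/subsetP=> w wm; rewrite mem_add_level wm orbT.
  case/orP=> [/andP [/eqP -> /eqP ->] | zm]; last exact/sub_new/(subsetP (N m m0)).
  rewrite inE; apply/existsP; exists y.
  by rewrite mem_add_level yi orbT.
Qed.

Lemma level_disjoint_add_level L M i i' x :
  (forall m, x \notin nth set0 L m) -> (forall m, x \notin nth set0 M m) ->
  i != i' -> level_disjoint L M ->
  level_disjoint (add_level L i x) (add_level M i' x).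
Proof.
move=> xL xM ii' /level_disjointP D; apply/level_disjointP=> m z m0.
rewrite !mem_add_level; case: (eqVneq z x) => [-> | _] /=; last exact: D.
by rewrite (negbTE (xL _)) (negbTE (xM _)) !orbF => /eqP -> /eqP mi; rewrite mi eqxx in ii'.
Qed.

Lemma connect_cross r W x y :
  x \notin W -> y \in W -> connect r x y ->
  exists a b, [/\ a \notin W, b \in W & r a b].
Proof.
move=> xW yW /connectP [p]; elim: p x xW => [|z p IH] x xW /=.
  by move=> _ yx; rewrite -yx yW in xW.
case/andP=> rxz zp yl; have [zW | zW] := boolP (z \in W); first by exists x, z.
exact: IH zp yl.
Qed.

End LevelPartitions.

Section Extension.
Variables (T : finType) (e : rel T) (v : T) (VH : {set T}) (k : nat).
Variable P : 'I_k -> seq {set T}.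
Implicit Types (W : {set T}) (Q : 'I_k -> seq {set T}).

Definition extends_on (W : {set T}) (Q : 'I_k -> seq {set T}) : Prop :=
  [/\ VH \subset W,
      forall j, level_partition W e (Q j) /\ rooted_in v (Q j),
      level_disjoint_family Q
    & forall j i, nth set0 (Q j) i :&: VH = nth set0 (P j) i].

Lemma extends_on_add W Q x y :
  x \notin W -> y \in W -> y != v -> e y x -> extends_on W Q ->
  exists Q', extends_on (x |: W) Q'.
Proof.
move=> xW yW yv eyx [VHW LP LD R].
have level j : {i | y \in nth set0 (Q j) i}.
  by apply: sigW; have /level_partitionP [_ U _] := (LP j).1; apply/U.
pose l j := sval (level j).
have yl j : y \in nth set0 (Q j) (l j) by rewrite /l; case: (level j).
have l_gt0 j : 0 < l j := rooted_level_gt0 (LP j).2 yv (yl j).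
have l_inj j1 j2 : j1 != j2 -> l j1 != l j2.
  move=> ne; apply/negP => /eqP l12.
  have /level_disjointP D := LD _ _ ne.
  by apply: D (l_gt0 j1) (yl j1) _; rewrite l12.
have xQ j m : x \notin nth set0 (Q j) m.
  by apply: contra xW; apply: subsetP; apply: nth_level_sub (LP j).1.
exists (fun j => add_level (Q j) (l j).+1 x); split.
- exact: subset_trans VHW (subsetUr _ _).
- move=> j; split; first exact: level_partition_add_level (yl j) eyx (LP j).1.
  exact: rooted_add_level (LP j).2.
- by move=> j1 j2 ne; apply: level_disjoint_add_level (LD _ _ ne); rewrite ?eqSS ?l_inj.
- move=> j i; rewrite add_level_setI ?R //.
  by apply: contra xW; apply: subsetP.
Qed.

Lemma extends_on_setT W Q :
  symmetric e -> v \in VH ->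
  (forall x, x != v -> exists2 y, y \in VH & connect (del_vertex e v) x y) ->
  extends_on W Q -> exists Q', extends_on [set: T] Q'.
Proof.
move=> se vH meet; move: {2}#|~: W| (leqnn #|~: W|) => n.
elim: n W Q => [|n IH] W Q.
  rewrite leqn0 cards_eq0 => /eqP W0 extQ; exists Q.
  by rewrite -[W]setCK W0 setC0 in extQ.
move=> sizeW extQ; have [VHW _ _ _] := extQ.
have [WT | /subsetPn [x _ xW]] := boolP ([set: T] \subset W).
  by exists Q; have -> : [set: T] = W by apply/eqP; rewrite eqEsubset WT subsetT.
have xv : x != v by apply: contra xW => /eqP ->; apply: subsetP VHW v vH.
have [y yH xy] := meet x xv.
have [a [b [aW bW /and3P [eab av bv]]]] := connect_cross xW (subsetP VHW y yH) xy.
have [Q' extQ'] := extends_on_add aW bW bv (etrans (se b a) eab) extQ.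
apply: IH extQ'; rewrite -ltnS (leq_trans _ sizeW) //.
by rewrite setCU setIC -setDE proper_card // properD1 // in_setC.
Qed.

End Extension.

Theorem lemma2 (T : finType) (e : rel T) (v : T)
  (VH : {set T}) (eH : rel T) (k : nat) (P : 'I_k -> seq {set T}) :
  simple_graph e -> connected_graph e ->
  (* H is a subgraph of G *)
  symmetric eH ->
  (forall x y, eH x y -> [&& e x y, x \in VH & y \in VH]) ->
  v \in VH ->
  (* H meets every connected component of G - v *)
  (forall x, x != v -> exists2 y, y \in VH & connect (del_vertex e v) x y) ->
  (* k level-disjoint partitions of H rooted in v *)
  (forall j, level_partition VH eH (P j) /\ rooted_in v (P j)) ->
  level_disjoint_family P ->
  exists Q : 'I_k -> seq {set T},
    [/\ (forall j, level_partition [set: T] e (Q j) /\ rooted_in v (Q j)),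
        level_disjoint_family Q
      & (forall j i, nth set0 (Q j) i :&: VH = nth set0 (P j) i)].
Proof.
move=> [se _] _ _ eH_sub vH meet PH PD.
have eHe : subrel eH e by move=> x y /eH_sub /and3P [].
have extP : extends_on e v VH P VH P.
  split=> // [j | j i].
  - by have [LP rP] := PH j; split; first exact: level_partition_subrel eHe LP.
  - by apply/setIidPl; apply: nth_level_sub (PH j).1.
have [Q [_ QG QD QP]] := extends_on_setT se vH meet extP.
by exists Q.
Qed.
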